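(* Let $n\ge 2$ and $q\ge 2$ be integers and put $S_1=\sqrt{q^2+4(q-1)(n-2)}$. Let $d$ be an integer and define $j$ by $d=n-1-\frac{n-2+j}{q}$ (so $j=q(n-1-d)-n+2$), and assume $j\in\left[0,\frac{S_1-q}{2}\right)$. Put $s=1-\frac{2d}{n}$, $d_0=n-\frac{j(n-1)}{q(j+q-1)}$, and let $e$ be the unique rational number in $(0,1]$ such that $d_0+e$ is an integer. Define $$f(t)=\Big(t+1+\tfrac{2e}{n}-\tfrac{2j(n-1)}{nq(j+q-1)}\Big)\Big(t+1+\tfrac{2(e-1)}{n}-\tfrac{2j(n-1)}{nq(j+q-1)}\Big)(t-s),$$ and write its Krawtchouk expansion as $f(t)=f_0+f_1Q_1^{(n,q)}(t)+f_2Q_2^{(n,q)}(t)+f_3Q_3^{(n,q)}(t)$. Then $f_2>0$.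
   Context: For integers $n,q$ and $0\le i\le n$, the Krawtchouk polynomial is $K_i^{(n,q)}(z)=\sum_{l=0}^{i}(-1)^l(q-1)^{i-l}\binom{z}{l}\binom{n-z}{i-l}$ (a polynomial in $z$ of degree $i$), and the normalized Krawtchouk polynomial is $Q_i^{(n,q)}(t)=\frac{1}{r_i}K_i^{(n,q)}\!\big(\tfrac{n(1-t)}{2}\big)$ with $r_i=(q-1)^i\binom{n}{i}$; every real polynomial of degree $m\le n$ in $t$ has a unique expansion $\sum_{i=0}^m f_iQ_i^{(n,q)}(t)$. *)

From HB Require Import structures.
From mathcomp Require Import all_boot all_order all_algebra.
From mathcomp Require Import reals.
Set Implicit Arguments. Unset Strict Implicit. Unset Printing Implicit Defensive.
Import Order.TTheory GRing.Theory Num.Theory.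
Local Open Scope ring_scope.

Definition binomp (R : realType) (l : nat) : {poly R} :=
  (l`!%:R)^-1 *: \prod_(k < l) ('X - (k%:R)%:P).

Definition kraw (R : realType) (n q i : nat) : {poly R} :=
  \sum_(l < i.+1)
     (((-1) ^+ l * (q%:R - 1) ^+ (i - l)) *:
        (binomp R l * (binomp R (i - l) \Po ((n%:R)%:P - 'X)))).

Definition kr (R : realType) (n q i : nat) : R := (q%:R - 1) ^+ i * 'C(n, i)%:R.

Definition krawQ (R : realType) (n q i : nat) : {poly R} :=
  (kr R n q i)^-1 *: (kraw R n q i \Po ((n%:R / 2) *: (1 - 'X))).

(* The second and third central differences at -1, 0, 1, 2 are linear
   functionals extracting the t^2 and t^3 coefficients of a cubic.  Since Q_i
   has degree i, applying them to the Krawtchouk expansion of a cubic p gives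
   f_2 (qn)^2 / (8 r_2) = [t^2] p - 3 (q-2)(n-2)/(qn) [t^3] p.  For the given f
   the right-hand side is (2/n) (2e + P / (q (j+q-1))) with
   P = (q-1)(q+2n-4) - j(j+1), and P > 0 because j lies below (S_1 - q)/2, the
   positive root of j^2 + qj - (q-1)(n-2). *)
From HB Require Import structures.
From mathcomp Require Import all_boot all_order all_algebra.
From mathcomp Require Import reals ring lra.
Import Order.TTheory GRing.Theory Num.Theory.
Local Open Scope ring_scope.

Section FiniteDifferences.
Variable R : numFieldType.
Implicit Types (p : {poly R}) (a b c : R).

Definition second_diff p : R := (p.[1] + p.[-1]) / 2 - p.[0].
Definition third_diff p : R := (p.[2] - 3 * p.[1] + 3 * p.[0] - p.[-1]) / 6.

Lemma second_diff_monic_cubic a b c :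
  second_diff (('X + a%:P) * ('X + b%:P) * ('X - c%:P)) = a + b - c.
Proof. by rewrite /second_diff !(hornerM, hornerD, hornerN, hornerX, hornerC); field. Qed.

Lemma third_diff_monic_cubic a b c :
  third_diff (('X + a%:P) * ('X + b%:P) * ('X - c%:P)) = 1.
Proof. by rewrite /third_diff !(hornerM, hornerD, hornerN, hornerX, hornerC); field. Qed.

End FiniteDifferences.

Arguments second_diff {R} p.
Arguments third_diff {R} p.

Section Krawtchouk.
Variables (R : realType) (n q : nat).
Implicit Types (z t : R).

Lemma horner_binomp l z :
  (binomp R l).[z] = (l`!%:R)^-1 * \prod_(k < l) (z - k%:R).
Proof. by rewrite /binomp hornerZ horner_prod; under eq_bigr do rewrite !hornerE. Qed.

Lemma horner_kraw i z :
  (kraw R n q i).[z] = \sum_(l < i.+1) ((-1) ^+ l * (q%:R - 1) ^+ (i - l)) *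
     ((binomp R l).[z] * (binomp R (i - l)).[n%:R - z]).
Proof.
rewrite /kraw horner_sum; apply: eq_bigr => l _.
by rewrite hornerZ hornerM horner_comp !hornerE.
Qed.

Lemma horner_krawQ i t :
  (krawQ R n q i).[t] = (kr R n q i)^-1 * (kraw R n q i).[n%:R / 2 * (1 - t)].
Proof. by rewrite /krawQ hornerZ horner_comp !hornerE. Qed.

Lemma horner_kraw0 z : (kraw R n q 0).[z] = 1.
Proof. by rewrite horner_kraw big_ord1 /= !horner_binomp !big_ord0 subnn !fact0; field. Qed.

Lemma horner_kraw1 z : (kraw R n q 1).[z] = (q%:R - 1) * (n%:R - z) - z.
Proof.
rewrite horner_kraw !big_ord_recr big_ord0 /= !horner_binomp.
by rewrite !big_ord_recr !big_ord0 /= !factS !fact0; field.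
Qed.

Lemma horner_kraw2 z : (kraw R n q 2).[z] =
  (q%:R - 1) ^+ 2 * ((n%:R - z) * (n%:R - z - 1) / 2)
  - (q%:R - 1) * z * (n%:R - z) + z * (z - 1) / 2.
Proof.
rewrite horner_kraw !big_ord_recr big_ord0 /= !horner_binomp.
by rewrite !big_ord_recr !big_ord0 /= (_ : (2 - 1 = 1)%N) // !factS !fact0; field.
Qed.

Lemma horner_kraw3 z : (kraw R n q 3).[z] =
  (q%:R - 1) ^+ 3 * ((n%:R - z) * (n%:R - z - 1) * (n%:R - z - 2) / 6)
  - (q%:R - 1) ^+ 2 * z * ((n%:R - z) * (n%:R - z - 1) / 2)
  + (q%:R - 1) * (z * (z - 1) / 2) * (n%:R - z) - z * (z - 1) * (z - 2) / 6.
Proof.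
rewrite horner_kraw !big_ord_recr big_ord0 /= !horner_binomp.
rewrite !big_ord_recr !big_ord0 /= (_ : (3 - 1 = 2)%N) // (_ : (3 - 2 = 1)%N) //.
by rewrite !factS !fact0; field.
Qed.

Lemma kr2_gt0 : (2 <= n)%N -> (2 <= q)%N -> 0 < kr R n q 2.
Proof.
move=> n_ge2 q_ge2; rewrite /kr mulr_gt0 ?exprn_gt0 ?ltr0n ?bin_gt0 //.
by rewrite subr_gt0 ltr1n.
Qed.

Lemma krawQ_expansion_coef2 (p : {poly R}) (f0 f1 f2 f3 : R) :
  (0 < n)%N -> (0 < q)%N ->
  p = f0 *: krawQ R n q 0 + f1 *: krawQ R n q 1
      + f2 *: krawQ R n q 2 + f3 *: krawQ R n q 3 ->
  f2 * (kr R n q 2)^-1 * (q%:R * n%:R) ^+ 2 / 8 =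
    second_diff p - 3 * (q%:R - 2) * (n%:R - 2) / (q%:R * n%:R) * third_diff p.
Proof.
move=> n_gt0 q_gt0 ->.
have n0 : n%:R != 0 :> R by rewrite pnatr_eq0 -lt0n.
have q0 : q%:R != 0 :> R by rewrite pnatr_eq0 -lt0n.
rewrite /second_diff /third_diff !hornerD !(hornerZ _ (krawQ _ _ _ _)).
rewrite !horner_krawQ !horner_kraw0 !horner_kraw1 !horner_kraw2 !horner_kraw3.
(* [r_3] vanishes for [n = 2]: its inverse must stay an opaque scalar. *)
move: (kr R n q 0)^-1 (kr R n q 1)^-1 (kr R n q 2)^-1 (kr R n q 3)^-1.
by move=> k0 k1 k2 k3; field; apply/andP.
Qed.

End Krawtchouk.

Arguments kr2_gt0 {R n q}.
Arguments krawQ_expansion_coef2 {R n q p f0 f1 f2 f3}.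

Lemma lt_root_gap_gt0 {R : realType} {N Q J : R} : 2 <= N -> 2 <= Q -> 0 <= J ->
  J < (Num.sqrt (Q ^+ 2 + 4 * (Q - 1) * (N - 2)) - Q) / 2 ->
  0 < (Q - 1) * (Q + 2 * N - 4) - J * (J + 1).
Proof.
move=> N_ge2 Q_ge2 J_ge0 J_lt.
set S := Num.sqrt _ in J_lt.
have S_ge0 : 0 <= S by rewrite sqrtr_ge0.
have S2 : S ^+ 2 = Q ^+ 2 + 4 * (Q - 1) * (N - 2) by rewrite sqr_sqrtr //; nra.
have : (2 * J + Q) ^+ 2 < S ^+ 2 by nra.
by rewrite S2; nra.
Qed.

Theorem lemma1 (R : realType) (n q : nat) (d : int) (e : R)
  (hn : (2 <= n)%N) (hq : (2 <= q)%N) :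
  let S1 : R := Num.sqrt ((q%:R) ^+ 2 + 4 * (q%:R - 1) * (n%:R - 2)) in
  let j : int := (q%:Z * (n%:Z - 1 - d) - n%:Z + 2)%R in
  let jR : R := j%:~R in
  let s : R := 1 - 2 * d%:~R / n%:R in
  let d0 : R := n%:R - jR * (n%:R - 1) / (q%:R * (jR + q%:R - 1)) in
  let a : R := 2 * jR * (n%:R - 1) / (n%:R * q%:R * (jR + q%:R - 1)) in
  let f : {poly R} :=
    ('X + (1 + 2 * e / n%:R - a)%:P) *
    ('X + (1 + 2 * (e - 1) / n%:R - a)%:P) * ('X - s%:P) in
  (0 <= j)%R -> jR < (S1 - q%:R) / 2 ->
  0 < e -> e <= 1 -> d0 + e \is a Num.int ->
  forall f0 f1 f2 f3 : R,
    f = f0 *: krawQ R n q 0 + f1 *: krawQ R n q 1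
        + f2 *: krawQ R n q 2 + f3 *: krawQ R n q 3 ->
    0 < f2.
Proof.
move=> S1 j jR s d0 a f j_ge0 j_lt e_gt0 _ _ f0 f1 f2 f3 hf.
have := krawQ_expansion_coef2 (ltnW hn) (ltnW hq) hf.
rewrite second_diff_monic_cubic third_diff_monic_cubic mulr1.
set N : R := n%:R; set Q : R := q%:R.
have N_ge2 : 2 <= N by rewrite ler_nat.
have Q_ge2 : 2 <= Q by rewrite ler_nat.
have J_ge0 : 0 <= jR by rewrite ler0z.
have P_gt0 := lt_root_gap_gt0 N_ge2 Q_ge2 J_ge0 j_lt.
have [N0 Q0 Y0] : [/\ N != 0, Q != 0 & jR + Q - 1 != 0].
  by split; apply: lt0r_neq0; lra.
have dE : d%:~R = N - 1 - (N - 2 + jR) / Q.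
  by rewrite /jR /j !(intrD, intrN, intrM) -/N -/Q; field.
have -> : 1 + 2 * e / N - a + (1 + 2 * (e - 1) / N - a) - s
          - 3 * (Q - 2) * (N - 2) / (Q * N) =
   2 / N * (2 * e + ((Q - 1) * (Q + 2 * N - 4) - jR * (jR + 1)) / (Q * (jR + Q - 1))).
  by rewrite /a /s dE; field; rewrite N0 Q0 Y0.
move=> eq_f2.
have : 0 < f2 / kr R n q 2 * (Q * N) ^+ 2 / 8.
  have QY_gt0 : 0 < Q * (jR + Q - 1) by apply: mulr_gt0; lra.
  by rewrite eq_f2 mulr_gt0 ?divr_gt0 ?addr_gt0 ?mulr_gt0 ?invr_gt0 //; lra.
rewrite -!mulrA pmulr_lgt0 // mulr_gt0 ?invr_gt0 ?kr2_gt0 //.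
by rewrite mulr_gt0 ?exprn_gt0 ?mulr_gt0 //; lra.
Qed.
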